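(* Let $\mathbf{k}$ be a field of characteristic $\neq 2$. Let $(\wedge V,d)$ be a minimal algebra generated in degree $1$ (i.e. $V=V^1$), and let $(A,d)$, $(B,d)$ be CDGAs over $\mathbf{k}$ with $A^0=\mathbf{k}$. If $f:(\wedge V,d)\to(A,d)$ is a CDGA morphism and $\psi:(B,d)\to(A,d)$ is a quasi-isomorphism (not necessarily surjective), then there is a CDGA morphism $g:(\wedge V,d)\to(B,d)$ with $\psi\circ g=f$. Moreover, if $f$ is a quasi-isomorphism then so is $g$.
   Context: A CDGA over $\mathbf{k}$ is a graded-commutative algebra $A=\bigoplus_{i\ge0}A^i$ with a degree $+1$ derivation $d$, $d^2=0$. A quasi-isomorphism is a CDGA morphism inducing an isomorphism in cohomology. A minimal algebra is a CDGA $(\wedge V,d)$ where $\wedge V$ is the free graded-commutative algebra on a graded vector space $V=\bigoplus_{i\geq1}V^i$, and there is a basis $\{x_\tau\}_{\tau\in I}$ of $V$ indexed by a well-ordered set $I$ such that $\deg x_\mu\le\deg x_\tau$ whenever $\mu<\tau$ and each $dx_\tau$ lies in the subalgebra generated by the $x_\mu$ with $\mu<\tau$. *)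

From HB Require Import structures.
From mathcomp Require Import all_boot all_order all_algebra.
Set Implicit Arguments. Unset Strict Implicit. Unset Printing Implicit Defensive.
Import Order.TTheory GRing.Theory Num.Theory.
Local Open Scope ring_scope.

(* A graded k-algebra is represented by a k-algebra A together with a family
   of predicates [deg n] singling out the homogeneous elements of degree n,
   i.e. deg n x <-> x \in A^n.                  *)

Section Graded.
Variable k : fieldType.

Definition gca (A : algType k) (deg : nat -> A -> Prop) : Prop :=
  [/\
      (forall n, deg n 0) ,
      (forall n (a : k) x y, deg n x -> deg n y -> deg n (a *: x + y)) ,
      (forall x : A, exists N (f : nat -> A),
          (forall i, deg i (f i)) /\ x = \sum_(i < N) f i) ,
      (forall N (f : nat -> A), (forall i, deg i (f i)) ->
          \sum_(i < N) f i = 0 -> forall i, (i < N)%N -> f i = 0) &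
      [/\ deg 0 1 ,
          (forall i j (a b : A), deg i a -> deg j b -> deg (i + j)%N (a * b)) &
          (forall i j (a b : A), deg i a -> deg j b ->
              a * b = (-1) ^+ (i * j) *: (b * a))]].

Definition cdga (A : algType k) (deg : nat -> A -> Prop) (d : A -> A) : Prop :=
  [/\ gca deg ,
      (forall (a : k) x y, d (a *: x + y) = a *: d x + d y) ,
      (forall n x, deg n x -> deg n.+1 (d x)) ,
      (forall x, d (d x) = 0) &
      (forall i (a b : A), deg i a -> d (a * b) = d a * b + (-1) ^+ i *: (a * d b))].

Definition gmor (A B : algType k) (degA : nat -> A -> Prop) (degB : nat -> B -> Prop)
  (f : A -> B) : Prop :=
  [/\ (forall (a : k) x y, f (a *: x + y) = a *: f x + f y) ,
      f 1 = 1 ,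
      (forall x y, f (x * y) = f x * f y) &
      (forall n x, degA n x -> degB n (f x))].

Definition cdga_mor (A B : algType k) (degA : nat -> A -> Prop) (dA : A -> A)
  (degB : nat -> B -> Prop) (dB : B -> B) (f : A -> B) : Prop :=
  gmor degA degB f /\ (forall x, f (dA x) = dB (f x)).

Definition coboundary (A : algType k) (deg : nat -> A -> Prop) (d : A -> A)
  (n : nat) (x : A) : Prop :=
  match n with
  | 0 => x = 0
  | m.+1 => exists a, deg m a /\ d a = x
  end.

Definition quasi_iso (A B : algType k) (degA : nat -> A -> Prop) (dA : A -> A)
  (degB : nat -> B -> Prop) (dB : B -> B) (f : A -> B) : Prop :=
  cdga_mor degA dA degB dB f /\
  forall n,
    (* injectivity of H^n(f) *)
    (forall z, degA n z -> dA z = 0 -> coboundary degB dB n (f z) ->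
        coboundary degA dA n z) /\
    (* surjectivity of H^n(f) *)
    (forall w, degB n w -> dB w = 0 ->
        exists z, [/\ degA n z, dA z = 0 & coboundary degB dB n (w - f z)]).

Definition well_order (I : Type) (lt : I -> I -> Prop) : Prop :=
  [/\ well_founded lt ,
      (forall a b c, lt a b -> lt b c -> lt a c) &
      (forall a b, lt a b \/ a = b \/ lt b a)].

Definition in_subalg_gen (A : algType k) (I : Type) (x : I -> A) (P : I -> Prop)
  (y : A) : Prop :=
  forall S : A -> Prop,
    S 1 -> (forall mu, P mu -> S (x mu)) ->
    (forall (a : k) u v, S u -> S v -> S (a *: u + v)) ->
    (forall u v, S u -> S v -> S (u * v)) -> S y.

(* (L, deg) is the free graded-commutative algebra on the degree-1 family x,
   i.e. L = \wedge V with V = V^1 having basis (x_i)_{i in I}: universal property *)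
Definition free_gca_deg1 (L : algType k) (deg : nat -> L -> Prop) (I : Type)
  (x : I -> L) : Prop :=
  gca deg /\ (forall i, deg 1%N (x i)) /\
  forall (C : algType k) (degC : nat -> C -> Prop), gca degC ->
  forall c : I -> C, (forall i, degC 1%N (c i)) ->
    exists phi : L -> C,
      [/\ gmor deg degC phi, (forall i, phi (x i) = c i) &
          (forall psi : L -> C, gmor deg degC psi -> (forall i, psi (x i) = c i) ->
             forall y, psi y = phi y)].

Definition minimal_deg1 (L : algType k) (deg : nat -> L -> Prop) (d : L -> L)
  (I : Type) (lt : I -> I -> Prop) (x : I -> L) : Prop :=
  [/\ cdga deg d , free_gca_deg1 deg x , well_order lt &
      (forall tau, in_subalg_gen x (fun mu => lt mu tau) (d (x tau)))].

End Graded.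

From HB Require Import structures.
From mathcomp Require Import all_boot all_order all_algebra.
From Stdlib Require Import ClassicalEpsilon FunctionalExtensionality.
Set Implicit Arguments. Unset Strict Implicit. Unset Printing Implicit Defensive.
Import GRing.Theory.
Local Open Scope ring_scope.

(* The generators [x t] are sent to elements [b t] of [B^1] by well-founded recursion on [t].
   Once [b mu] is chosen for [mu < t], the free extension [phi] of these choices commutes with
   the differentials on the subalgebra generated by the [x mu], which contains [dL (x t)]; so
   [phi (dL (x t))] is a 2-cocycle whose image [dA (f (x t))] under [psi] is exact.  Injectivity
   of [H^2(psi)] gives [b] with [dB b = phi (dL (x t))], and surjectivity of [H^1(psi)] together
   with [A^0 = k] corrects [b] so that [psi b = f (x t)].  The resulting [g] commutes with the
   differentials and with [f] on generators, hence everywhere, and two-out-of-three makes it a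
   quasi-isomorphism when [f] is one.  Freeness is encoded by the universal property. *)

Section KLinear.
Variables (k : fieldType) (A B : algType k).

Definition klinear (h : A -> B) := forall (a : k) x y, h (a *: x + y) = a *: h x + h y.

Variables (h : A -> B) (hh : klinear h).

Lemma klinear0 : h 0 = 0.
Proof.
have := hh 1 0 0; rewrite !scale1r addr0 => /(congr1 (fun z => z - h 0)).
by rewrite subrr addrK => /esym.
Qed.

Lemma klinearD : {morph h : u v / u + v}.
Proof. by move=> u v; have := hh 1 u v; rewrite !scale1r. Qed.

Lemma klinearZ a : {morph h : u / a *: u}.
Proof. by move=> u; have := hh a u 0; rewrite !addr0 klinear0 addr0. Qed.

Lemma klinearB : {morph h : u v / u - v}.
Proof. by move=> u v; rewrite klinearD -scaleN1r klinearZ scaleN1r. Qed.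

Lemma klinear_sum N (F : nat -> A) : h (\sum_(i < N) F i) = \sum_(i < N) h (F i).
Proof. exact: (big_morph h klinearD klinear0). Qed.

End KLinear.

Section GradedAlgebra.
Variables (k : fieldType) (A : algType k) (deg : nat -> A -> Prop).
Hypothesis gA : gca deg.

Lemma gca_deg0 n : deg n 0.
Proof. by case: gA. Qed.

Lemma gca_degZD n (a : k) u v : deg n u -> deg n v -> deg n (a *: u + v).
Proof. by case: gA => _ H _ _ _; apply: H. Qed.

Lemma gca_degD n u v : deg n u -> deg n v -> deg n (u + v).
Proof. by move=> hu hv; have := gca_degZD 1 hu hv; rewrite scale1r. Qed.

Lemma gca_degZ n (a : k) u : deg n u -> deg n (a *: u).
Proof. by move=> hu; have := gca_degZD a hu (gca_deg0 n); rewrite addr0. Qed.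

Lemma gca_degB n u v : deg n u -> deg n v -> deg n (u - v).
Proof. by move=> hu hv; rewrite addrC -scaleN1r; apply: gca_degZD. Qed.

Lemma gca_deg1 : deg 0 1.
Proof. by case: gA => _ _ _ _ []. Qed.

Lemma gca_degM i j u v : deg i u -> deg j v -> deg (i + j)%N (u * v).
Proof. by case: gA => _ _ _ _ [_ H _]; apply: H. Qed.

Lemma gca_decomp u : exists N (F : nat -> A), (forall i, deg i (F i)) /\ u = \sum_(i < N) F i.
Proof. by case: gA. Qed.

Lemma gca_direct N (F : nat -> A) : (forall i, deg i (F i)) ->
  \sum_(i < N) F i = 0 -> forall i, (i < N)%N -> F i = 0.
Proof. by case: gA => _ _ _ H _; apply: H. Qed.

End GradedAlgebra.

Section CDGA.
Variables (k : fieldType) (A : algType k) (deg : nat -> A -> Prop) (d : A -> A).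
Hypothesis hA : cdga deg d.

Lemma cdga_gca : gca deg.
Proof. by case: hA. Qed.

Lemma cdga_klinear : klinear d.
Proof. by case: hA. Qed.

Lemma cdga_deg n u : deg n u -> deg n.+1 (d u).
Proof. by case: hA => _ _ H _ _; apply: H. Qed.

Lemma cdga_dd u : d (d u) = 0.
Proof. by case: hA. Qed.

Lemma cdga_leibniz i u v : deg i u -> d (u * v) = d u * v + (-1) ^+ i *: (u * d v).
Proof. by case: hA => _ _ _ _ H; apply: H. Qed.

Lemma cdga_d1 : d 1 = 0.
Proof.
have := cdga_leibniz 1 (gca_deg1 cdga_gca).
rewrite !mulr1 mul1r expr0 scale1r => /(congr1 (fun z => z - d 1)).
by rewrite subrr addrK => /esym.
Qed.

End CDGA.

Lemma gmor_klinear (k : fieldType) (A B : algType k) degA degB (h : A -> B) :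
  gmor degA degB h -> klinear h.
Proof. by case. Qed.

Lemma gmor_comp (k : fieldType) (A B C : algType k) degA degB degC
    (h : A -> B) (h' : B -> C) :
  gmor degA degB h -> gmor degB degC h' -> gmor degA degC (h' \o h).
Proof.
case=> l1 o1 m1 g1 [l2 o2 m2 g2]; split => /=.
- by move=> a u v; rewrite l1 l2.
- by rewrite o1 o2.
- by move=> u v; rewrite m1 m2.
- by move=> n u /g1 /g2.
Qed.

Lemma gmor_eq_on_gen (k : fieldType) (L C : algType k) degL degC (I : Type)
    (x : I -> L) (P : I -> Prop) (h1 h2 : L -> C) :
  gmor degL degC h1 -> gmor degL degC h2 -> (forall mu, P mu -> h1 (x mu) = h2 (x mu)) ->
  forall y, in_subalg_gen x P y -> h1 y = h2 y.
Proof.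
move=> [l1 o1 m1 _] [l2 o2 m2 _] hx y hy; apply: (hy (fun z => h1 z = h2 z)) => //.
- by rewrite o1 o2.
- by move=> a u v eu ev; rewrite l1 l2 eu ev.
- by move=> u v eu ev; rewrite m1 m2 eu ev.
Qed.

Section GeneratedSubalgebra.
Local Unset Implicit Arguments.
Context {k : fieldType} {L : algType k} {I : Type} (x : I -> L).

Definition generated : L -> Prop := in_subalg_gen x (fun _ => True).

Lemma generated1 : generated 1.
Proof. by move=> S. Qed.

Lemma generated_gen i : generated (x i).
Proof. by move=> S _ hx _ _; apply: hx. Qed.

Lemma generatedZD (a : k) {u v : L} : generated u -> generated v -> generated (a *: u + v).
Proof. by move=> hu hv S h1 hx hl hm; apply/hl; [apply: hu | apply: hv]. Qed.

Lemma generatedM {u v : L} : generated u -> generated v -> generated (u * v).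
Proof. by move=> hu hv S h1 hx hl hm; apply/hm; [apply: hu | apply: hv]. Qed.

Lemma generated0 : generated 0.
Proof. by have := generatedZD (-1) generated1 generated1; rewrite scaleN1r addNr. Qed.

Lemma generatedD {u v : L} : generated u -> generated v -> generated (u + v).
Proof. by move=> hu hv; have := generatedZD 1 hu hv; rewrite scale1r. Qed.

Lemma generatedZ (a : k) {u : L} : generated u -> generated (a *: u).
Proof. by move=> hu; have := generatedZD a hu generated0; rewrite addr0. Qed.

(* A classical boolean version of [generated], needed to form the subtype. *)
Definition generatedb : pred L :=
  fun y => if excluded_middle_informative (generated y) then true else false.

Lemma generatedbP y : reflect (generated y) (generatedb y).
Proof. by rewrite /generatedb; case: excluded_middle_informative; constructor. Qed.

Lemma generatedb_subalg_closed : GRing.subsemialg_closed generatedb.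
Proof.
split.
- by apply/generatedbP; apply: generated1.
- split; first by apply/generatedbP; apply: generated0.
  by move=> u v /generatedbP hu /generatedbP hv; apply/generatedbP; apply: generatedD.
- by move=> a u /generatedbP hu; apply/generatedbP; apply: generatedZ.
- by move=> u v /generatedbP hu /generatedbP hv; apply/generatedbP; apply: generatedM.
Qed.

Record gen_subalg := GenSubalg { gen_val : L; gen_valP : generatedb gen_val }.

HB.instance Definition _ := [isSub for gen_val].
HB.instance Definition _ := [Choice of gen_subalg by <:].
HB.instance Definition _ :=
  GRing.SubChoice_isSubAlgebra.Build k L generatedb gen_subalg generatedb_subalg_closed.

Lemma generated_val (u : gen_subalg) : generated (val u).
Proof. by apply/generatedbP; apply: gen_valP. Qed.

End GeneratedSubalgebra.

Lemma regroup_by_degree (k : fieldType) (A : algType k) (deg : nat -> A -> Prop)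
    (P : A -> Prop) (s : seq (nat * A)) :
  gca deg -> P 0 -> (forall u v, P u -> P v -> P (u + v)) ->
  (forall p, p \in s -> deg p.1 p.2 /\ P p.2) ->
  exists N (F : nat -> A), (forall i, deg i (F i) /\ P (F i)) /\
    \sum_(p <- s) p.2 = \sum_(i < N) F i.
Proof.
move=> gA P0 PD hs.
exists (\max_(p <- s) p.1).+1, (fun i => \sum_(p <- s | p.1 == i) p.2); split.
  move=> i; rewrite big_seq_cond; split.
    apply: (big_ind (deg i)) => [|u v|p /andP[/hs[+ _] /eqP <-]] //.
      exact: gca_deg0.
    exact: gca_degD.
  by apply: (big_ind P) => // p /andP[/hs[_ +] _].
under [RHS]eq_bigr do rewrite big_mkcond.
rewrite exchange_big /= big_seq [RHS]big_seq; apply: eq_bigr => p hp.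
have hN : (p.1 < (\max_(q <- s) q.1).+1)%N by rewrite ltnS; apply: leq_bigmax_seq.
by rewrite -big_mkcond (big_pred1 (Ordinal hN)).
Qed.

Section GradedGeneratedSubalgebra.
Variables (k : fieldType) (L : algType k) (deg : nat -> L -> Prop) (I : Type) (x : I -> L).
Hypotheses (gL : gca deg) (deg_x : forall i, deg 1%N (x i)).

Lemma generated_homog_seq y : generated x y ->
  exists s : seq (nat * L),
    (forall p, p \in s -> deg p.1 p.2 /\ generated x p.2) /\ y = \sum_(p <- s) p.2.
Proof.
move=> hy; apply: (hy (fun z => exists s : seq (nat * L),
    (forall p, p \in s -> deg p.1 p.2 /\ generated x p.2) /\ z = \sum_(p <- s) p.2)).
- exists [:: (0%N, 1)]; split; last by rewrite big_seq1.
  by move=> p; rewrite inE => /eqP -> /=; split; [apply: gca_deg1 | apply: generated1].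
- move=> mu _; exists [:: (1%N, x mu)]; split; last by rewrite big_seq1.
  by move=> p; rewrite inE => /eqP -> /=; split; [apply: deg_x | apply: generated_gen].
- move=> a u v [s1 [h1 ->]] [s2 [h2 ->]].
  exists ([seq (p.1, a *: p.2) | p <- s1] ++ s2); split.
    move=> p; rewrite mem_cat => /orP[/mapP[q /h1[hq1 hq2] ->]|/h2] //=.
    by split; [apply: gca_degZ | apply: generatedZ].
  by rewrite big_cat big_map scaler_sumr.
- move=> u v [s1 [h1 ->]] [s2 [h2 ->]].
  exists [seq ((p.1 + q.1)%N, p.2 * q.2) | p : nat * L <- s1, q : nat * L <- s2].
  split.
    move=> r /allpairsP[[p q] [/h1[hp1 hp2] /h2[hq1 hq2] ->]] /=.
    by split; [apply: gca_degM | apply: generatedM].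
  rewrite big_allpairs_dep /= mulr_suml.
  by apply: eq_bigr => p _; rewrite mulr_sumr.
Qed.

Definition gen_deg n (u : gen_subalg x) := deg n (val u).

Lemma gen_subalg_gca : gca gen_deg.
Proof.
split.
- by move=> n; rewrite /gen_deg raddf0; apply: gca_deg0.
- by move=> n a u v; rewrite /gen_deg; apply: gca_degZD.
- move=> u.
  have [s [hs e]] := generated_homog_seq (generated_val x u).
  have [N [F [hF eF]]] := regroup_by_degree (P := generated x) gL (generated0 x) (@generatedD _ _ _ x) hs.
  have valF i : val (insubd (0 : gen_subalg x) (F i)) = F i.
    by rewrite val_insubd; case: (hF i) => _ /generatedbP ->.
  exists N, (fun i => insubd 0 (F i)); split.
    by move=> i; rewrite /gen_deg valF; case: (hF i).
  apply: val_inj; rewrite raddf_sum e eF; by apply: eq_bigr => i _; symmetry; apply: valF.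
- move=> N F hF hs i hi; apply: val_inj; rewrite raddf0.
  apply: (gca_direct gL hF _ hi).
  by rewrite -raddf_sum hs raddf0.
- split.
  + by rewrite /gen_deg rmorph1; apply: gca_deg1.
  + by move=> i j u v; rewrite /gen_deg; apply: gca_degM.
  + move=> i j u v hu hv; apply: val_inj => /=.
    by case: gL => _ _ _ _ [_ _ comm]; rewrite (comm i j).
Qed.

Lemma val_gmor : gmor gen_deg deg val.
Proof. by split. Qed.

End GradedGeneratedSubalgebra.

(* The universal property into the generated subalgebra gives a section of its inclusion. *)
Lemma free_gca_generated (k : fieldType) (L : algType k) (deg : nat -> L -> Prop)
    (I : Type) (x : I -> L) :
  free_gca_deg1 deg x -> forall y, generated x y.
Proof.
move=> [gL [deg_x univ]] y.
have [phi [gphi phix _]] := univ _ _ (gen_subalg_gca gL deg_x)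
  (fun i => GenSubalg x (x i) (introT (generatedbP x _) (generated_gen x i))) deg_x.
have [idL [_ _ uniq]] := univ L deg gL x deg_x.
have gid : gmor deg deg id by split.
have idy : y = idL y by apply: (uniq _ gid).
have -> : y = val (phi y).
  rewrite {1}idy -(uniq _ (gmor_comp gphi (val_gmor deg x))) //.
  by move=> i /=; rewrite phix.
exact: generated_val.
Qed.

Section DifferentialDefect.
Variables (k : fieldType) (L B : algType k).
Variables (degL : nat -> L -> Prop) (dL : L -> L) (degB : nat -> B -> Prop) (dB : B -> B).
Hypotheses (hL : cdga degL dL) (hB : cdga degB dB).
Variable phi : L -> B.
Hypothesis hphi : gmor degL degB phi.

Definition d_defect y := phi (dL y) - dB (phi y).

Lemma d_defect_klinear : klinear d_defect.
Proof.
have [lphi _ _ _] := hphi; move=> a u v.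
by rewrite /d_defect (cdga_klinear hL) lphi lphi (cdga_klinear hB) scalerBr opprD addrACA.
Qed.

Lemma d_defect_deg i y : degL i y -> degB i.+1 (d_defect y).
Proof.
have [_ _ _ gphi] := hphi; move=> hy.
apply: (gca_degB (cdga_gca hB)); first by apply/gphi/(cdga_deg hL).
by apply/(cdga_deg hB)/gphi.
Qed.

Lemma d_defectM i u v : degL i u ->
  d_defect (u * v) = d_defect u * phi v + (-1) ^+ i *: (phi u * d_defect v).
Proof.
have [lphi _ mphi gphi] := hphi; move=> hu.
rewrite /d_defect (cdga_leibniz hL _ hu) mphi (klinearD lphi) mphi (klinearZ lphi) mphi.
by rewrite (cdga_leibniz hB _ (gphi _ _ hu)) mulrBl mulrBr scalerBr opprD addrACA.
Qed.

(* The defect shifts degrees by one, so it kills a sum only if it kills each homogeneous part. *)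
Lemma d_defect_homog_eq0 u N (F : nat -> L) : (forall i, degL i (F i)) ->
  u = \sum_(i < N) F i -> d_defect u = 0 -> forall i, (i < N)%N -> d_defect (F i) = 0.
Proof.
move=> hF -> hu i hi.
pose G j := if j is j'.+1 then d_defect (F j') else 0.
apply: (gca_direct (cdga_gca hB) (N := N.+1) (F := G) _ _ (i := i.+1) hi).
  by case=> [|j] /=; [apply: (gca_deg0 (cdga_gca hB)) | apply: d_defect_deg].
by rewrite big_ord_recl /= add0r -(klinear_sum d_defect_klinear).
Qed.

Lemma d_defectM_eq0 u v : d_defect u = 0 -> d_defect v = 0 -> d_defect (u * v) = 0.
Proof.
move=> hu hv; have [N [F [hF eu]]] := gca_decomp (cdga_gca hL) u.
rewrite eu mulr_suml (klinear_sum d_defect_klinear N (fun i => F i * v)).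
apply: big1 => i _.
by rewrite (d_defectM _ (hF i)) (d_defect_homog_eq0 hF eu hu) // hv mulr0 scaler0 mul0r addr0.
Qed.

Lemma gmor_dcomm_gen (I : Type) (x : I -> L) (P : I -> Prop) :
  (forall mu, P mu -> phi (dL (x mu)) = dB (phi (x mu))) ->
  forall y, in_subalg_gen x P y -> phi (dL y) = dB (phi y).
Proof.
have [lphi phi1 _ _] := hphi.
move=> hx y hy; apply/eqP; rewrite -subr_eq0; apply/eqP.
apply: (hy (fun z => d_defect z = 0)).
- by rewrite /d_defect (cdga_d1 hL) phi1 (klinear0 lphi) (cdga_d1 hB) subrr.
- by move=> mu hmu; rewrite /d_defect hx // subrr.
- by move=> a u v hu hv; rewrite d_defect_klinear hu hv scaler0 addr0.
- exact: d_defectM_eq0.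
Qed.

End DifferentialDefect.

Lemma cdga_mor_coboundary (k : fieldType) (B A : algType k) degB dB degA dA (psi : B -> A) :
  cdga_mor degB dB degA dA psi ->
  forall n b, coboundary degB dB n b -> coboundary degA dA n (psi b).
Proof.
move=> [[lpsi _ _ gpsi] cpsi] [|n] b /=; first by move=> ->; rewrite (klinear0 lpsi).
by move=> [a [ha <-]]; exists (psi a); split; [apply: gpsi | rewrite cpsi].
Qed.

Lemma quasi_iso_cancel (k : fieldType) (L B A : algType k) degL dL degB dB degA dA
    (g : L -> B) (psi : B -> A) (f : L -> A) :
  cdga degB dB -> cdga_mor degL dL degB dB g -> quasi_iso degB dB degA dA psi ->
  (forall y, psi (g y) = f y) -> quasi_iso degL dL degA dA f ->
  quasi_iso degL dL degB dB g.
Proof.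
move=> hB hg [hpsi qpsi] psig [hf qf]; split=> // n.
have [[lg _ _ gg] cg] := hg; have [[lpsi _ _ gpsi] cpsi] := hpsi.
split=> [z hz dz cz | w hw dw].
  by apply: (qf n).1 => //; rewrite -psig; apply: (cdga_mor_coboundary hpsi).
have dpw : dA (psi w) = 0 by rewrite -cpsi dw (klinear0 lpsi).
have [z [hz dz cz]] := (qf n).2 _ (gpsi _ _ hw) dpw.
exists z; split=> //; apply: (qpsi n).1.
- by apply: (gca_degB (cdga_gca hB)) => //; apply: gg.
- by rewrite (klinearB (cdga_klinear hB)) dw -cg dz (klinear0 lg) subrr.
- by rewrite (klinearB lpsi) psig.
Qed.

Section FreeExtension.
Variables (k : fieldType) (L B : algType k) (degL : nat -> L -> Prop) (degB : nat -> B -> Prop).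
Variables (I : Type) (x : I -> L).

Definition free_ext (c : I -> B) : L -> B :=
  epsilon (inhabits (fun _ => 0))
    (fun phi => gmor degL degB phi /\ forall i, phi (x i) = c i).

Lemma free_extP c : free_gca_deg1 degL x -> gca degB -> (forall i, degB 1%N (c i)) ->
  gmor degL degB (free_ext c) /\ forall i, free_ext c (x i) = c i.
Proof.
move=> [_ [_ univ]] gB hc; apply: (epsilon_spec (inhabits (fun _ => 0))
  (fun phi => gmor degL degB phi /\ forall i, phi (x i) = c i)).
by have [phi [? ? _]] := univ _ _ gB c hc; exists phi.
Qed.

End FreeExtension.

Definition restr (I B : Type) (b0 : B) (lt : I -> I -> Prop) (c : I -> B) (t : I) : I -> B :=
  fun mu => match excluded_middle_informative (lt mu t) with
            | left _ => c mu
            | right _ => b0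
            end.

Lemma restr_lt (I B : Type) (b0 : B) (lt : I -> I -> Prop) (c : I -> B) t mu :
  lt mu t -> restr b0 lt c t mu = c mu.
Proof. by rewrite /restr; case: excluded_middle_informative. Qed.

Lemma restr_pred (I B : Type) (b0 : B) (lt : I -> I -> Prop) (c : I -> B) t (P : B -> Prop) :
  P b0 -> (forall mu, lt mu t -> P (c mu)) -> forall mu, P (restr b0 lt c t mu).
Proof. by move=> P0 Pc mu; rewrite /restr; case: excluded_middle_informative => [/Pc|]. Qed.

Lemma wf_dependent_choice (I B : Type) (b0 : B) (lt : I -> I -> Prop)
    (Q : I -> (I -> B) -> B -> Prop) :
  well_founded lt ->
  (forall t c, (forall mu, lt mu t -> Q mu (restr b0 lt c mu) (c mu)) ->
     exists b, Q t (restr b0 lt c t) b) ->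
  exists c, forall t, Q t (restr b0 lt c t) (c t).
Proof.
move=> wf step.
pose F t (rec : forall mu, lt mu t -> B) := epsilon (inhabits b0) (Q t (fun mu =>
  match excluded_middle_informative (lt mu t) with left h => rec mu h | right _ => b0 end)).
pose c := Fix wf (fun _ => B) F.
have cE t : c t = epsilon (inhabits b0) (Q t (restr b0 lt c t)).
  rewrite /c Fix_eq; first by [].
  move=> t' r1 r2 hr; rewrite /F; congr (epsilon _ (Q t' _)).
  by apply: functional_extensionality => mu; case: excluded_middle_informative.
exists c; apply: (well_founded_ind wf) => t IH.
by rewrite cE; apply: (epsilon_spec (inhabits b0) (Q t (restr b0 lt c t))); apply: step.
Qed.

Section Lifting.
Local Unset Implicit Arguments.
Context {k : fieldType} {L A B : algType k}.
Context {degL : nat -> L -> Prop} {dL : L -> L} {I : Type} {lt : I -> I -> Prop} {x : I -> L}.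
Hypotheses (hL : cdga degL dL) (fL : free_gca_deg1 degL x).
Hypothesis dx_gen : forall t, in_subalg_gen x (lt^~ t) (dL (x t)).
Context {degA : nat -> A -> Prop} {dA : A -> A} {degB : nat -> B -> Prop} {dB : B -> B}.
Hypotheses (hA : cdga degA dA) (hB : cdga degB dB).
Hypothesis hA0 : forall a : A, degA 0%N a -> exists c : k, a = c *: 1.
Context {f : L -> A} {psi : B -> A}.
Hypotheses (hf : cdga_mor degL dL degA dA f) (hpsi : quasi_iso degB dB degA dA psi).

Let gA := cdga_gca hA.
Let gB := cdga_gca hB.

Lemma lift_generator (phi : L -> B) t : gmor degL degB phi ->
  (forall mu, lt mu t -> phi (dL (x mu)) = dB (phi (x mu))) ->
  (forall mu, lt mu t -> psi (phi (x mu)) = f (x mu)) ->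
  exists b, [/\ degB 1%N b, dB b = phi (dL (x t)) & psi b = f (x t)].
Proof.
move=> gphi phi_d phi_f.
have [[mpsi cpsi] qpsi] := hpsi; have [lpsi _ _ gpsi] := mpsi.
have [[_ _ _ degf] cf] := hf.
set w := phi (dL (x t)).
have dw : dB w = 0.
  rewrite -(gmor_dcomm_gen hL hB gphi phi_d (dx_gen t)) (cdga_dd hL).
  exact: klinear0 (gmor_klinear gphi).
have pw : psi w = dA (f (x t)).
  by rewrite -cf -(gmor_eq_on_gen (gmor_comp gphi mpsi) hf.1 phi_f (dx_gen t)).
have deg_x i : degL 1%N (x i) by case: fL => _ [].
have [b0 [hb0 db0]] : coboundary degB dB 2 w.
  apply: (qpsi 2%N).1 => //.
    by have [_ _ _ gp] := gphi; apply/gp/(cdga_deg hL)/deg_x.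
  by exists (f (x t)); split; [apply/degf/deg_x | rewrite pw].
set z := f (x t) - psi b0.
have hz : degA 1%N z by apply: (gca_degB gA); [apply/degf/deg_x | apply: gpsi].
have dz : dA z = 0 by rewrite (klinearB (cdga_klinear hA)) -cpsi db0 pw subrr.
have [c0 [hc0 dc0 [a [ha da]]]] := (qpsi 1%N).2 _ hz dz.
have [r ar] := hA0 a ha.
have psi_c0 : psi c0 = z.
  apply/eqP; rewrite eq_sym -subr_eq0 -da ar (klinearZ (cdga_klinear hA)).
  by rewrite (cdga_d1 hA) scaler0.
exists (b0 + c0); split.
- exact: (gca_degD gB).
- by rewrite (klinearD (cdga_klinear hB)) db0 dc0 addr0.
- by rewrite (klinearD lpsi) psi_c0 addrC subrK.
Qed.

Lemma free_ext_dgen_eq (c1 c2 : I -> B) t :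
  (forall i, degB 1%N (c1 i)) -> (forall i, degB 1%N (c2 i)) ->
  (forall mu, lt mu t -> c1 mu = c2 mu) ->
  free_ext degL degB x c1 (dL (x t)) = free_ext degL degB x c2 (dL (x t)).
Proof.
move=> hc1 hc2 e12; have [g1 gx1] := free_extP fL gB hc1; have [g2 gx2] := free_extP fL gB hc2.
by apply: (gmor_eq_on_gen g1 g2 _ (dx_gen t)) => mu hmu; rewrite gx1 gx2 e12.
Qed.

Definition lift_spec t (c : I -> B) (b : B) :=
  [/\ degB 1%N b, dB b = free_ext degL degB x c (dL (x t)) & psi b = f (x t)].

Hypothesis lt_trans : forall a b c, lt a b -> lt b c -> lt a c.

Lemma lift_spec_step t (c : I -> B) :
  (forall mu, lt mu t -> lift_spec mu (restr 0 lt c mu) (c mu)) ->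
  exists b, lift_spec t (restr 0 lt c t) b.
Proof.
move=> IH.
have deg_c mu : lt mu t -> degB 1%N (c mu) by case/IH.
have deg_restr u : (forall mu, lt mu u -> lt mu t) -> forall i, degB 1%N (restr 0 lt c u i).
  by move=> sub; apply: restr_pred (gca_deg0 gB _) _ => mu /sub /deg_c.
have [gphi phix] := free_extP fL gB (deg_restr t (fun _ h => h)).
apply: (lift_generator _ t gphi) => mu lt_mu_t; rewrite phix restr_lt //; case: (IH mu lt_mu_t) => // _ -> _.
have lt_nu_t nu : lt nu mu -> lt nu t by move/lt_trans; apply.
apply: free_ext_dgen_eq.
- exact: deg_restr.
- exact: deg_restr.
- by move=> nu lt_nu_mu; rewrite !restr_lt //; apply: lt_nu_t.
Qed.

Lemma lift_exists : well_founded lt ->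
  exists g, cdga_mor degL dL degB dB g /\ forall y, psi (g y) = f y.
Proof.
move=> wf; have [c hc] := wf_dependent_choice (b0 := 0) (Q := lift_spec) wf lift_spec_step.
have deg_c i : degB 1%N (c i) by case: (hc i).
have [gg gx] := free_extP fL gB deg_c.
exists (free_ext degL degB x c); split.
  split=> // y; apply: (gmor_dcomm_gen hL hB gg _ (free_gca_generated fL y)) => t _.
  rewrite gx; case: (hc t) => _ -> _; apply: free_ext_dgen_eq => // [|mu lt_mu_t].
    by apply: restr_pred (gca_deg0 gB _) _ => mu _.
  by rewrite restr_lt.
move=> y; apply: (gmor_eq_on_gen (gmor_comp gg hpsi.1.1) hf.1 _ (free_gca_generated fL y)).
by move=> t _ /=; rewrite gx; case: (hc t).
Qed.

End Lifting.

Theorem theoremA2 (k : fieldType) (hk : 2%N \notin [pchar k])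
  (L : algType k) (degL : nat -> L -> Prop) (dL : L -> L)
  (I : Type) (lt : I -> I -> Prop) (x : I -> L)
  (hL : minimal_deg1 degL dL lt x)
  (A : algType k) (degA : nat -> A -> Prop) (dA : A -> A) (hA : cdga degA dA)
  (hA0 : forall a : A, degA 0%N a -> exists c : k, a = c *: 1)
  (B : algType k) (degB : nat -> B -> Prop) (dB : B -> B) (hB : cdga degB dB)
  (f : L -> A) (hf : cdga_mor degL dL degA dA f)
  (psi : B -> A) (hpsi : quasi_iso degB dB degA dA psi) :
  exists g : L -> B,
    [/\ cdga_mor degL dL degB dB g ,
        (forall y, psi (g y) = f y) &
        (quasi_iso degL dL degA dA f -> quasi_iso degL dL degB dB g)].
Proof.
have [cL fL [wf lt_trans _] dx_gen] := hL.
have [g [hg psi_g]] := lift_exists cL fL dx_gen hA hB hA0 hf hpsi lt_trans wf.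
by exists g; split=> // /(quasi_iso_cancel hB hg hpsi psi_g).
Qed.
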